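(* Let $n\ge 1$. If $E\subseteq\mathbb{N}\times\mathbb{N}$ is a $\Sigma^0_{n+1}$ index equivalence relation, then $E$ is $\Pi^0_n$-graphable with diameter $2$.
   Context: $\varphi_e$ denotes the $e$-th partial computable function in a standard acceptable numbering. An equivalence relation $E$ on $\mathbb{N}$ is an index equivalence relation if whenever $\varphi_a=\varphi_{a'}$ and $\varphi_b=\varphi_{b'}$, we have $aEb\iff a'Eb'$. An equivalence relation $E$ on $X$ is $\Gamma$-graphable (for a pointclass $\Gamma$) if there is a simple undirected graph $G\subseteq X\times X$ in $\Gamma$ whose connectedness relation equals $E$; it is $\Gamma$-graphable with diameter $k$ if such a $G$ exists in which $k$ is the least integer such that any two $G$-connected points are joined by a path of length at most $k$. *)

From Stdlib Require Import Arith Lia Relations Cantor.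

Definition pair (x y : nat) : nat := Cantor.to_nat (x, y).
Definition p1 (z : nat) : nat := fst (Cantor.of_nat z).
Definition p2 (z : nat) : nat := snd (Cantor.of_nat z).

Inductive code : Type :=
| CZero : code
| CSucc : code
| CFst  : code
| CSnd  : code
| CPair : code -> code -> code
| CComp : code -> code -> code
| CRec  : code -> code -> code
| CMin  : code -> code.

Inductive eval : code -> nat -> nat -> Prop :=
| eZero x : eval CZero x 0
| eSucc x : eval CSucc x (S x)
| eFst x : eval CFst x (p1 x)
| eSnd x : eval CSnd x (p2 x)
| ePair f g x a b : eval f x a -> eval g x b -> eval (CPair f g) x (pair a b)
| eComp f g x y z : eval g x y -> eval f y z -> eval (CComp f g) x z
| eRec0 f g a v : eval f a v -> eval (CRec f g) (pair a 0) v
| eRecS f g a k r v : eval (CRec f g) (pair a k) r ->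
    eval g (pair a (pair k r)) v -> eval (CRec f g) (pair a (S k)) v
| eMin f x y : eval f (pair x y) 0 ->
    (forall z, z < y -> exists w, w <> 0 /\ eval f (pair x z) w) ->
    eval (CMin f) x y.

(* Goedel numbering: decoding of natural numbers into programs (surjective). *)
Fixpoint decode_fuel (fuel n : nat) : code :=
  match fuel with
  | 0 => CZero
  | S k =>
    match n with
    | 0 => CZero
    | S m =>
      let t := p1 m in let r := p2 m in
      match t with
      | 0 => CZero
      | 1 => CSucc
      | 2 => CFst
      | 3 => CSnd
      | 4 => CPair (decode_fuel k (p1 r)) (decode_fuel k (p2 r))
      | 5 => CComp (decode_fuel k (p1 r)) (decode_fuel k (p2 r))
      | 6 => CRec (decode_fuel k (p1 r)) (decode_fuel k (p2 r))
      | 7 => CMin (decode_fuel k r)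
      | _ => CZero
      end
    end
  end.

Definition decode (e : nat) : code := decode_fuel (S e) e.

Definition phi (e x v : nat) : Prop := eval (decode e) x v.

Definition same_fun (a b : nat) : Prop := forall x v, phi a x v <-> phi b x v.

Definition computable_set (A : nat -> Prop) : Prop :=
  exists e, forall x, (A x /\ phi e x 1) \/ (~ A x /\ phi e x 0).

Fixpoint Sigma0 (n : nat) (A : nat -> Prop) : Prop :=
  match n with
  | 0 => computable_set A
  | S k => exists B : nat -> Prop,
      Sigma0 k (fun z => ~ B z) /\ (forall x, A x <-> exists y, B (pair x y))
  end.

Definition Pi0 (n : nat) (A : nat -> Prop) : Prop := Sigma0 n (fun z => ~ A z).

Definition rel_code (R : nat -> nat -> Prop) : nat -> Prop := fun z => R (p1 z) (p2 z).
Definition Sigma0_rel (n : nat) (R : nat -> nat -> Prop) : Prop := Sigma0 n (rel_code R).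
Definition Pi0_rel (n : nat) (R : nat -> nat -> Prop) : Prop := Pi0 n (rel_code R).

Definition index_equiv (E : nat -> nat -> Prop) : Prop :=
  equivalence nat E /\
  forall a a' b b', same_fun a a' -> same_fun b b' -> (E a b <-> E a' b').

Definition simple_graph (G : nat -> nat -> Prop) : Prop :=
  (forall x, ~ G x x) /\ (forall x y, G x y -> G y x).

Definition connected (G : nat -> nat -> Prop) : nat -> nat -> Prop :=
  clos_refl_trans nat G.

Fixpoint reach_le (G : nat -> nat -> Prop) (k : nat) (x y : nat) : Prop :=
  match k with
  | 0 => x = y
  | S j => reach_le G j x y \/ exists z, reach_le G j x z /\ G z y
  end.

Definition bounded_by (G : nat -> nat -> Prop) (k : nat) : Prop :=
  forall x y, connected G x y -> reach_le G k x y.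

Definition has_diameter (G : nat -> nat -> Prop) (k : nat) : Prop :=
  bounded_by G k /\ forall j, j < k -> ~ bounded_by G j.

Definition Pi0_graphable_diam (n : nat) (E : nat -> nat -> Prop) (k : nat) : Prop :=
  exists G : nat -> nat -> Prop,
    simple_graph G /\ Pi0_rel n G /\
    (forall x y, connected G x y <-> E x y) /\ has_diameter G k.

(* Write E a b as (exists c, B <<a,b>,c>) with B in Pi^0_n.  The padding index
   [pad e k] computes phi_e, and e and k can be read off from it computably.
   Every triple (a, b, c) with B <<a,b>,c> yields the vertex z = pad a <b,c>,
   which is joined to both a and b.  By index invariance z is E-equivalent to a,
   so every edge lies inside an E-class, while E a b gives the path a - z - b.
   Adjacency is Pi^0_n because a vertex determines computably the only two
   vertices it can be a witness vertex for, leaving a single Pi^0_n test of B.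
   The diameter is not 1: 0 is never a padded index, so it is E-equivalent but
   not adjacent to pad a <a,0> for a = pad 0 0. *)

From Stdlib Require Import Arith Lia Relations Cantor Classical.

Lemma p1_pair x y : p1 (pair x y) = x.
Proof. unfold p1, pair. now rewrite Cantor.cancel_of_to. Qed.

Lemma p2_pair x y : p2 (pair x y) = y.
Proof. unfold p2, pair. now rewrite Cantor.cancel_of_to. Qed.

Lemma pair_p1_p2 z : pair (p1 z) (p2 z) = z.
Proof. unfold p1, p2, pair. rewrite <- surjective_pairing. apply Cantor.cancel_to_of. Qed.

Lemma pair_inj a b a' b' : pair a b = pair a' b' -> a = a' /\ b = b'.
Proof.
  intro H. split; [apply (f_equal p1) in H | apply (f_equal p2) in H];
    now rewrite ?p1_pair, ?p2_pair in H.
Qed.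

Lemma pair_ge x y : x <= pair x y /\ y <= pair x y.
Proof. unfold pair. pose proof (Cantor.to_nat_non_decreasing x y). lia. Qed.

Lemma p1_le z : p1 z <= z.
Proof. rewrite <- (pair_p1_p2 z) at 2. apply pair_ge. Qed.

Lemma p2_le z : p2 z <= z.
Proof. rewrite <- (pair_p1_p2 z) at 2. apply pair_ge. Qed.

Lemma decode_fuel_stable fuel fuel' n :
  n < fuel -> n < fuel' -> decode_fuel fuel n = decode_fuel fuel' n.
Proof.
  revert fuel' n; induction fuel as [|k IH]; intros [|k'] [|m] H H'; try lia; try reflexivity.
  simpl. pose proof (p1_le (p2 m)). pose proof (p2_le (p2 m)). pose proof (p2_le m).
  destruct (p1 m) as [|[|[|[|[|[|[|[|t]]]]]]]]; try reflexivity; f_equal; apply IH; lia.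
Qed.

Lemma decode_fuel_decode fuel n : n < fuel -> decode_fuel fuel n = decode n.
Proof. intro H. apply decode_fuel_stable; lia. Qed.

Lemma decode_S t r : decode (S (pair t r)) =
  match t with
  | 0 => CZero
  | 1 => CSucc
  | 2 => CFst
  | 3 => CSnd
  | 4 => CPair (decode (p1 r)) (decode (p2 r))
  | 5 => CComp (decode (p1 r)) (decode (p2 r))
  | 6 => CRec (decode (p1 r)) (decode (p2 r))
  | 7 => CMin (decode r)
  | _ => CZero
  end.
Proof.
  pose proof (pair_ge t r). pose proof (p1_le r). pose proof (p2_le r).
  unfold decode at 1. assert (Hk : pair t r < S (pair t r)) by lia. revert Hk.
  generalize (S (pair t r)) at 1 2 as k. intros k Hk.
  remember (pair t r) as m eqn:Hm. simpl. rewrite Hm, p1_pair, p2_pair in *.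
  destruct t as [|[|[|[|[|[|[|[|t]]]]]]]]; try reflexivity;
    f_equal; apply decode_fuel_decode; lia.
Qed.

Fixpoint enc (c : code) : nat :=
  match c with
  | CZero => 0
  | CSucc => S (pair 1 0)
  | CFst => S (pair 2 0)
  | CSnd => S (pair 3 0)
  | CPair f g => S (pair 4 (pair (enc f) (enc g)))
  | CComp f g => S (pair 5 (pair (enc f) (enc g)))
  | CRec f g => S (pair 6 (pair (enc f) (enc g)))
  | CMin f => S (pair 7 (enc f))
  end.

Lemma decode_enc c : decode (enc c) = c.
Proof.
  induction c; simpl enc; rewrite ?decode_S, ?p1_pair, ?p2_pair; congruence || reflexivity.
Qed.

Lemma phi_enc c x v : phi (enc c) x v <-> eval c x v.
Proof. unfold phi. now rewrite decode_enc. Qed.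

Definition computable (f : nat -> nat) : Prop := exists c, forall x, eval c x (f x).

Lemma computable_ext f g : (forall x, f x = g x) -> computable f -> computable g.
Proof. intros Hfg [c Hc]. exists c. intro x. rewrite <- Hfg. apply Hc. Qed.

Lemma computable_S : computable S.
Proof. exists CSucc. constructor. Qed.

Lemma computable_p1 : computable p1.
Proof. exists CFst. constructor. Qed.

Lemma computable_p2 : computable p2.
Proof. exists CSnd. constructor. Qed.

Lemma computable_comp f g : computable f -> computable g -> computable (fun x => f (g x)).
Proof. intros [c Hc] [d Hd]. exists (CComp c d). intro x. econstructor; eauto. Qed.

Lemma computable_pair f g :
  computable f -> computable g -> computable (fun x => pair (f x) (g x)).
Proof. intros [c Hc] [d Hd]. exists (CPair c d). intro x. now constructor. Qed.

Lemma computable_id : computable (fun x => x).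
Proof.
  apply (computable_ext (fun x => pair (p1 x) (p2 x))); [apply pair_p1_p2|].
  apply computable_pair; [apply computable_p1 | apply computable_p2].
Qed.

Lemma computable_const k : computable (fun _ => k).
Proof.
  induction k as [|k IH]; [exists CZero; constructor|].
  apply (computable_comp S (fun _ => k)); [apply computable_S | exact IH].
Qed.

Lemma computable_app2 (h : nat -> nat -> nat) f g :
  computable (fun z => h (p1 z) (p2 z)) -> computable f -> computable g ->
  computable (fun x => h (f x) (g x)).
Proof.
  intros Hh Hf Hg.
  apply (computable_ext (fun x => h (p1 (pair (f x) (g x))) (p2 (pair (f x) (g x))))).
  { intro x. now rewrite p1_pair, p2_pair. }
  apply (computable_comp (fun z => h (p1 z) (p2 z))); [exact Hh|].
  now apply computable_pair.
Qed.

Lemma computable_prim_rec (f : nat -> nat) (g : nat -> nat -> nat -> nat)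
    (h : nat -> nat -> nat) :
  computable f -> computable (fun z => g (p1 z) (p1 (p2 z)) (p2 (p2 z))) ->
  (forall a, h a 0 = f a) -> (forall a k, h a (S k) = g a k (h a k)) ->
  computable (fun z => h (p1 z) (p2 z)).
Proof.
  intros [F HF] [G HG] H0 HS. exists (CRec F G). intro z.
  rewrite <- (pair_p1_p2 z) at 1. generalize (p1 z) (p2 z). clear z. intros a k.
  induction k as [|k IH].
  - rewrite H0. constructor. apply HF.
  - rewrite HS. eapply eRecS; [exact IH|].
    specialize (HG (pair a (pair k (h a k)))). now rewrite !p2_pair, !p1_pair in HG.
Qed.

Lemma computable_pred : computable pred.
Proof.
  apply (computable_app2 (fun _ k => pred k) (fun x => x) (fun x => x));
    [|apply computable_id..].
  apply (computable_prim_rec (fun _ => 0) (fun _ k _ => k) (fun _ k => pred k)); auto.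
  - apply computable_const.
  - apply (computable_comp p1 p2); [apply computable_p1 | apply computable_p2].
Qed.

Lemma computable_sub : computable (fun z => p1 z - p2 z).
Proof.
  apply (computable_prim_rec (fun a => a) (fun _ _ r => pred r)).
  - apply computable_id.
  - apply (computable_comp pred); [apply computable_pred|].
    apply (computable_comp p2 p2); apply computable_p2.
  - apply Nat.sub_0_r.
  - intros. apply Nat.sub_succ_r.
Qed.

Lemma computable_add : computable (fun z => p1 z + p2 z).
Proof.
  apply (computable_prim_rec (fun a => a) (fun _ _ r => S r)).
  - apply computable_id.
  - apply (computable_comp S); [apply computable_S|].
    apply (computable_comp p2 p2); apply computable_p2.
  - apply Nat.add_0_r.
  - intros. apply Nat.add_succ_r.
Qed.

Lemma computable_mul : computable (fun z => p1 z * p2 z).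
Proof.
  apply (computable_prim_rec (fun _ => 0) (fun a _ r => r + a)).
  - apply computable_const.
  - apply (computable_app2 Nat.add); [apply computable_add | | apply computable_p1].
    apply (computable_comp p2 p2); apply computable_p2.
  - apply Nat.mul_0_r.
  - intros. apply Nat.mul_succ_r.
Qed.

Create HintDb computable.
#[local] Hint Resolve computable_S computable_p1 computable_p2 computable_pred
  computable_add computable_sub computable_mul : computable.

Ltac solve_computable :=
  lazymatch goal with
  | |- computable (fun _ => ?c) => apply computable_const
  | |- computable (fun z => z) => apply computable_id
  | |- computable (fun z => pair (@?f z) (@?g z)) =>
      apply (computable_pair f g); solve_computable
  | |- computable (fun z => ?h (@?f z) (@?g z)) =>
      apply (computable_app2 h f g); [auto with computable | solve_computable ..]
  | |- computable (fun z => ?h (@?f z)) =>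
      apply (computable_comp h f); [auto with computable | solve_computable]
  | |- _ => solve [auto with computable]
  end.

Lemma computable_set_iff_code A :
  computable_set A <-> exists c, forall x, exists v, eval c x v /\ (A x <-> v = 0).
Proof.
  assert (Hneg : computable (fun v => 1 - v)) by solve_computable.
  destruct Hneg as [Neg HNeg].
  assert (Hcomp : forall c x v, eval c x v -> eval (CComp Neg c) x (1 - v))
    by (intros; econstructor; eauto).
  split.
  - intros [e He]. exists (CComp Neg (decode e)). intro x.
    destruct (He x) as [[HA Hv] | [HA Hv]]; eexists; (split; [apply Hcomp, Hv|]).
    + split; auto.
    + split; [contradiction | discriminate].
  - intros [c Hc]. exists (enc (CComp Neg c)). intro x.
    destruct (Hc x) as [v [Hv HA]]. apply Hcomp in Hv. rewrite <- phi_enc in Hv.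
    destruct v; [left | right]; (split; [|exact Hv]); rewrite HA; lia.
Qed.

Lemma computable_set_eq f g :
  computable f -> computable g -> computable_set (fun x => f x = g x).
Proof.
  intros Hf Hg.
  assert (Hd : computable (fun x => (f x - g x) + (g x - f x))) by solve_computable.
  destruct Hd as [c Hc]. apply computable_set_iff_code. exists c. intro x.
  eexists. split; [apply Hc | lia].
Qed.

Lemma computable_set_preimage A f :
  computable f -> computable_set A -> computable_set (fun x => A (f x)).
Proof.
  rewrite !computable_set_iff_code. intros [F HF] [c Hc]. exists (CComp c F). intro x.
  destruct (Hc (f x)) as [v [Hv HA]]. exists v. split; [econstructor; eauto | exact HA].
Qed.

Lemma computable_set_combine (h : nat -> nat -> nat) (A A' C : nat -> Prop) :
  computable (fun z => h (p1 z) (p2 z)) -> computable_set A -> computable_set A' ->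
  (forall x v w, (A x <-> v = 0) -> (A' x <-> w = 0) -> (C x <-> h v w = 0)) ->
  computable_set C.
Proof.
  rewrite !computable_set_iff_code. intros [H HH] [c Hc] [d Hd] HC. exists (CComp H (CPair c d)).
  intro x. destruct (Hc x) as [v [Hv HA]], (Hd x) as [w [Hw HA']].
  exists (h v w). split; [|now apply HC].
  econstructor; [constructor; eauto|].
  specialize (HH (pair v w)). now rewrite p1_pair, p2_pair in HH.
Qed.

Lemma computable_set_not A : computable_set A -> computable_set (fun x => ~ A x).
Proof.
  intro HA. apply (computable_set_combine (fun v _ => 1 - v) A A); auto.
  - solve_computable.
  - intros x v _ Hv _. rewrite Hv. lia.
Qed.

Lemma computable_set_or A A' :
  computable_set A -> computable_set A' -> computable_set (fun x => A x \/ A' x).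
Proof.
  intros HA HA'. apply (computable_set_combine Nat.mul A A'); auto with computable.
  intros x v w Hv Hw. rewrite Hv, Hw, Nat.mul_eq_0. reflexivity.
Qed.

Lemma computable_set_and A A' :
  computable_set A -> computable_set A' -> computable_set (fun x => A x /\ A' x).
Proof.
  intros HA HA'. apply (computable_set_combine Nat.add A A'); auto with computable.
  intros x v w Hv Hw. rewrite Hv, Hw. lia.
Qed.

Lemma Sigma0_ext n A A' : (forall x, A x <-> A' x) -> Sigma0 n A -> Sigma0 n A'.
Proof.
  destruct n as [|k]; simpl.
  - intros H [e He]. exists e. intro x. rewrite <- H. apply He.
  - intros H [B [HB HA]]. exists B. split; [exact HB|]. intro x. rewrite <- H. apply HA.
Qed.

Lemma Sigma0_preimage n A f : computable f -> Sigma0 n A -> Sigma0 n (fun x => A (f x)).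
Proof.
  revert A f; induction n as [|k IH]; simpl; intros A f Hf.
  - now apply computable_set_preimage.
  - intros [B [HB HA]]. exists (fun z => B (pair (f (p1 z)) (p2 z))). split.
    + apply (IH (fun z => ~ B z)); [solve_computable | exact HB].
    + intro x. rewrite HA. setoid_rewrite p1_pair. setoid_rewrite p2_pair. reflexivity.
Qed.

Lemma Sigma0_computable n A : computable_set A -> Sigma0 n A.
Proof.
  revert A; induction n as [|k IH]; simpl; intros A HA; [exact HA|].
  exists (fun z => A (p1 z)). split.
  - apply IH, (computable_set_preimage (fun x => ~ A x)), computable_set_not;
      [auto with computable | exact HA].
  - intro x. setoid_rewrite p1_pair. split; [now exists 0 | now intros [_ H]].
Qed.

Lemma Sigma0_or_and n :
  (forall A A', Sigma0 n A -> Sigma0 n A' -> Sigma0 n (fun x => A x \/ A' x)) /\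
  (forall A A', Sigma0 n A -> Sigma0 n A' -> Sigma0 n (fun x => A x /\ A' x)).
Proof.
  induction n as [|k [IHor IHand]]; simpl.
  { split; [apply computable_set_or | apply computable_set_and]. }
  split; intros A A' [B [HB HA]] [B' [HB' HA']].
  - exists (fun z => B z \/ B' z). split.
    + apply (Sigma0_ext k (fun z => ~ B z /\ ~ B' z)); [intro; tauto | now apply IHand].
    + intro x. rewrite HA, HA'. split.
      * intros [[y Hy] | [y Hy]]; exists y; auto.
      * intros [y [Hy | Hy]]; [left | right]; exists y; auto.
  - exists (fun z => B (pair (p1 z) (p1 (p2 z))) /\ B' (pair (p1 z) (p2 (p2 z)))). split.
    + apply (Sigma0_ext k (fun z =>
        ~ B (pair (p1 z) (p1 (p2 z))) \/ ~ B' (pair (p1 z) (p2 (p2 z))))); [intro; tauto|].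
      apply IHor; apply (Sigma0_preimage k (fun z => ~ _ z)); auto; solve_computable.
    + intro x. rewrite HA, HA'. split.
      * intros [[y Hy] [y' Hy']]. exists (pair y y'). now rewrite !p1_pair, !p2_pair, !p1_pair.
      * intros [y [Hy Hy']]. rewrite !p1_pair in *. split; eexists; eauto.
Qed.

Lemma Sigma0_or n A A' : Sigma0 n A -> Sigma0 n A' -> Sigma0 n (fun x => A x \/ A' x).
Proof. apply Sigma0_or_and. Qed.

Lemma Sigma0_and n A A' : Sigma0 n A -> Sigma0 n A' -> Sigma0 n (fun x => A x /\ A' x).
Proof. apply Sigma0_or_and. Qed.

Definition pair_with_zero : code := CPair (CPair CFst CSnd) CZero.

(* The raw index of [CComp (CRec (decode e) (decode k)) pair_with_zero]: the recursion
   is only ever run at 0, so it computes phi_e while k is merely recorded.  It is built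
   from e and k themselves rather than through [enc], since [decode] is not injective. *)
Definition pad (e k : nat) : nat :=
  S (pair 5 (pair (S (pair 6 (pair e k))) (enc pair_with_zero))).

Definition pad_base (z : nat) : nat := p1 (p2 (pred (p1 (p2 (pred z))))).
Definition pad_key (z : nat) : nat := p2 (p2 (pred (p1 (p2 (pred z))))).

Lemma pad_base_pad e k : pad_base (pad e k) = e.
Proof.
  unfold pad_base, pad.
  now rewrite Nat.pred_succ, p2_pair, p1_pair, Nat.pred_succ, p2_pair, p1_pair.
Qed.

Lemma pad_key_pad e k : pad_key (pad e k) = k.
Proof.
  unfold pad_key, pad.
  now rewrite Nat.pred_succ, p2_pair, p1_pair, Nat.pred_succ, p2_pair, p2_pair.
Qed.

Lemma pad_inj e k e' k' : pad e k = pad e' k' -> e = e' /\ k = k'.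
Proof.
  intro H. split; [apply (f_equal pad_base) in H | apply (f_equal pad_key) in H];
    now rewrite ?pad_base_pad, ?pad_key_pad in H.
Qed.

Lemma pad_neq0 e k : pad e k <> 0.
Proof. discriminate. Qed.

Lemma decode_pad e k :
  decode (pad e k) = CComp (CRec (decode e) (decode k)) pair_with_zero.
Proof.
  unfold pad. rewrite decode_S, !p1_pair, !p2_pair, decode_S, !p1_pair, !p2_pair, decode_enc.
  reflexivity.
Qed.

Lemma eval_pair_with_zero x y : eval pair_with_zero x y <-> y = pair x 0.
Proof.
  split.
  - intro H. inversion_clear H as [| | | |? ? ? ? ? Hid Hz| | | |].
    inversion_clear Hid as [| | | |? ? ? ? ? H1 H2| | | |].
    inversion H1; inversion H2; inversion Hz. now rewrite pair_p1_p2.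
  - intros ->. rewrite <- (pair_p1_p2 x) at 2. repeat constructor.
Qed.

Lemma eval_rec_zero f g a v : eval (CRec f g) (pair a 0) v <-> eval f a v.
Proof.
  split; [|now constructor].
  intro H. inversion H;
    match goal with Hp : pair _ _ = pair a 0 |- _ => apply pair_inj in Hp as [-> Hk] end;
    [assumption | discriminate].
Qed.

Lemma same_fun_pad e k : same_fun e (pad e k).
Proof.
  intros x v. unfold phi. rewrite decode_pad. split.
  - intro H. econstructor; [now apply eval_pair_with_zero | now apply eval_rec_zero].
  - intro H. inversion_clear H as [| | | | |? ? ? y ? Hy Hrec| | |].
    apply eval_pair_with_zero in Hy as ->. now apply eval_rec_zero in Hrec.
Qed.

Lemma computable_pad : computable (fun z => pad (p1 z) (p2 z)).
Proof. unfold pad. solve_computable. Qed.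

Lemma computable_pad_base : computable pad_base.
Proof. unfold pad_base. solve_computable. Qed.

Lemma computable_pad_key : computable pad_key.
Proof. unfold pad_key. solve_computable. Qed.

#[local] Hint Resolve computable_pad computable_pad_base computable_pad_key : computable.

Lemma reach_le_connected G k x y : reach_le G k x y -> connected G x y.
Proof.
  revert y; induction k as [|k IH]; simpl; intros y H.
  - subst. apply rt_refl.
  - destruct H as [H | [z [Hz Hzy]]]; [now apply IH|].
    apply rt_trans with z; [now apply IH | now apply rt_step].
Qed.

Lemma reach_le_1 G x y : reach_le G 1 x y <-> x = y \/ G x y.
Proof.
  simpl. split.
  - intros [H | [z [-> H]]]; auto.
  - intros [H | H]; [now left | right; now exists x].
Qed.

Lemma reach_le_2_intro G x y z : x = y \/ G x y -> y = z \/ G y z -> reach_le G 2 x z.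
Proof.
  intros Hxy [<- | Hyz].
  - left. now apply reach_le_1.
  - right. exists y. split; [now apply reach_le_1 | exact Hyz].
Qed.

Lemma has_diameter_2 G :
  bounded_by G 2 -> (exists x y, connected G x y /\ x <> y /\ ~ G x y) -> has_diameter G 2.
Proof.
  intros H2 [x [y [Hc [Hneq Hadj]]]]. split; [exact H2|].
  intros j Hj Hb. specialize (Hb x y Hc).
  destruct j as [|[|j]]; [exact (Hneq Hb) | apply reach_le_1 in Hb; tauto | lia].
Qed.

Definition witness_edge (B : nat -> Prop) (z x : nat) : Prop :=
  exists a b c, z = pad a (pair b c) /\ B (pair (pair a b) c) /\ (x = a \/ x = b).

Definition witness_graph (B : nat -> Prop) (x y : nat) : Prop :=
  x <> y /\ (witness_edge B x y \/ witness_edge B y x).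

Lemma witness_graph_simple B : simple_graph (witness_graph B).
Proof. split; intros x; [|intros y]; unfold witness_graph; intuition. Qed.

Lemma witness_edge_iff B z x : witness_edge B z x <->
  (pad (pad_base z) (pad_key z) = z /\ (x = pad_base z \/ x = p1 (pad_key z))) /\
  B (pair (pair (pad_base z) (p1 (pad_key z))) (p2 (pad_key z))).
Proof.
  split.
  - intros (a & b & c & -> & HB & Hx).
    rewrite pad_base_pad, pad_key_pad, p1_pair, p2_pair. auto.
  - intros [[Hz Hx] HB]. exists (pad_base z), (p1 (pad_key z)), (p2 (pad_key z)).
    rewrite pair_p1_p2. auto.
Qed.

Lemma not_witness_edge_Sigma0 n B f g :
  Sigma0 n (fun w => ~ B w) -> computable f -> computable g ->
  Sigma0 n (fun w => ~ witness_edge B (f w) (g w)).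
Proof.
  intros HB Hf Hg.
  apply (Sigma0_ext n (fun w =>
    ~ (pad (pad_base (f w)) (pad_key (f w)) = f w /\
       (g w = pad_base (f w) \/ g w = p1 (pad_key (f w)))) \/
    ~ B (pair (pair (pad_base (f w)) (p1 (pad_key (f w)))) (p2 (pad_key (f w)))))).
  { intro w. rewrite witness_edge_iff. tauto. }
  apply Sigma0_or.
  - apply Sigma0_computable, computable_set_not, computable_set_and;
      [|apply computable_set_or]; apply computable_set_eq; solve_computable.
  - apply (Sigma0_preimage n (fun w => ~ B w)); [solve_computable | exact HB].
Qed.

Lemma witness_graph_Pi0 n B : Sigma0 n (fun w => ~ B w) -> Pi0_rel n (witness_graph B).
Proof.
  intro HB. unfold Pi0_rel, Pi0, rel_code, witness_graph.
  apply (Sigma0_ext n (fun w => p1 w = p2 w \/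
    (~ witness_edge B (p1 w) (p2 w) /\ ~ witness_edge B (p2 w) (p1 w)))).
  { intro w. tauto. }
  apply Sigma0_or; [|apply Sigma0_and; apply not_witness_edge_Sigma0; auto with computable].
  apply Sigma0_computable, computable_set_eq; auto with computable.
Qed.

Lemma witness_edge_graph B z x : witness_edge B z x -> z = x \/ witness_graph B z x.
Proof. intro H. destruct (Nat.eq_dec z x); [now left | right; split; auto]. Qed.

Lemma not_witness_graph_0_pad B a k :
  a <> 0 -> p1 k <> 0 -> ~ witness_graph B 0 (pad a k).
Proof.
  intros Ha Hk [_ [(a' & b & c & H0 & _) | (a' & b & c & Hz & _ & Hx)]].
  - exact (pad_neq0 _ _ (eq_sym H0)).
  - apply pad_inj in Hz as [-> ->]. rewrite p1_pair in Hk. destruct Hx; auto.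
Qed.

Section WitnessGraph.

Variables (E : nat -> nat -> Prop) (B : nat -> Prop).
Hypothesis E_equiv : equivalence nat E.
Hypothesis E_index :
  forall a a' b b', same_fun a a' -> same_fun b b' -> (E a b <-> E a' b').
Hypothesis E_witness : forall a b, E a b <-> exists c, B (pair (pair a b) c).

Lemma E_pad a k : E a (pad a k).
Proof.
  apply (E_index a a a); [intros ? ?; reflexivity | apply same_fun_pad | apply E_equiv].
Qed.

Lemma witness_edge_E z x : witness_edge B z x -> E z x.
Proof.
  intros (a & b & c & -> & HB & [-> | ->]).
  - apply E_equiv, E_pad.
  - apply (E_index a _ b b); [apply same_fun_pad | intros ? ?; reflexivity |].
    apply E_witness. now exists c.
Qed.

Lemma connected_witness_graph_E x y : connected (witness_graph B) x y -> E x y.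
Proof.
  induction 1 as [x y [_ [H | H]] | x | x y z _ IHxy _ IHyz].
  - now apply witness_edge_E.
  - apply E_equiv, witness_edge_E, H.
  - apply E_equiv.
  - now apply (equiv_trans _ _ E_equiv x y z).
Qed.

Lemma E_reach_le_2 a b : E a b -> reach_le (witness_graph B) 2 a b.
Proof.
  intros [c Hc]%E_witness. set (z := pad a (pair b c)).
  assert (Hza : witness_edge B z a) by (now exists a, b, c; auto).
  assert (Hzb : witness_edge B z b) by (now exists a, b, c; auto).
  apply reach_le_2_intro with z.
  - destruct (witness_edge_graph B z a Hza) as [-> | H];
      [now left | right; now apply witness_graph_simple].
  - now apply witness_edge_graph.
Qed.

Lemma witness_graph_connected_iff x y : connected (witness_graph B) x y <-> E x y.
Proof.
  split; [apply connected_witness_graph_E|].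
  intro H. eapply reach_le_connected, E_reach_le_2, H.
Qed.

Lemma witness_graph_diameter : has_diameter (witness_graph B) 2.
Proof.
  apply has_diameter_2.
  - intros x y H. now apply E_reach_le_2, connected_witness_graph_E.
  - pose (a := pad 0 0). exists 0, (pad a (pair a 0)). split; [|split].
    + apply witness_graph_connected_iff.
      apply (equiv_trans _ _ E_equiv _ a); apply E_pad.
    + apply not_eq_sym, pad_neq0.
    + apply not_witness_graph_0_pad; [|rewrite p1_pair]; apply pad_neq0.
Qed.

End WitnessGraph.

Theorem theorem5p1 (n : nat) (E : nat -> nat -> Prop) :
  1 <= n -> Sigma0_rel (S n) E -> index_equiv E -> Pi0_graphable_diam n E 2.
Proof.
  intros _ [B [HB HEB]] [E_equiv E_index].
  assert (E_witness : forall a b, E a b <-> exists c, B (pair (pair a b) c)).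
  { intros a b. rewrite <- HEB. unfold rel_code. now rewrite p1_pair, p2_pair. }
  exists (witness_graph B). split; [|split; [|split]].
  - apply witness_graph_simple.
  - now apply witness_graph_Pi0.
  - now apply witness_graph_connected_iff.
  - now apply witness_graph_diameter with E.
Qed.
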